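(* Assume $W$ satisfies conditions (i) and (ii) below on $[0,T]$. Then for every integer $r\ge1$ there is a constant $C$ such that for all $n\ge1$ and $0\le t\le T$, $$\sum_{j,k=1}^{\lfloor nt/2\rfloor}\Big(|\beta_n(2j-1,2k-1)|^r+|\beta_n(2j-1,2k-2)|^r+|\beta_n(2j-2,2k-1)|^r+|\beta_n(2j-2,2k-2)|^r\Big)\le C\Big\lfloor\frac{nt}{2}\Big\rfloor n^{-r/2}.$$
   Context: $W=\{W_t,t\ge0\}$ is a centered Gaussian process with continuous covariance. For integers $j,k\ge0$, $n\ge1$: $\beta_n(j,k)=\mathbb E[(W_{(j+1)/n}-W_{j/n})(W_{(k+1)/n}-W_{k/n})]$. Fix $T>0$. Condition (i): there is $C_1$ such that $\mathbb E[(W_t-W_{t-s})^2]\le C_1 s^{1/2}$ for all $0<s\le t\le T$. Condition (ii): there are constants $C_1$ and $1<\alpha\le 3/2$, $\beta=\tfrac32-\alpha$, such that for all $s>0$ and $2s\le r,t\le T$ with $|t-r|\ge2s$: $|\mathbb E[(W_t-W_{t-s})(W_r-W_{r-s})]|\le C_1s^2|t-r|^{-\alpha}(t\wedge r-s)^{-\beta}+C_1s^2|t-r|^{-3/2}$. *)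

From Stdlib Require Export Reals.
Open Scope R_scope.

(* The centered Gaussian process W is represented through its covariance
   kernel  Cov s t = E[W_s W_t]  (all quantities in the statement only
   depend on it). *)

Fixpoint sumR (f : nat -> R) (m : nat) : R :=
  match m with O => 0 | S m' => sumR f m' + f m' end.

Definition is_covariance (Cov : R -> R -> R) : Prop :=
  (forall s t, 0 <= s -> 0 <= t -> Cov s t = Cov t s) /\
  (forall (m : nat) (ts : nat -> R) (a : nat -> R),
     (forall i, 0 <= ts i) ->
     0 <= sumR (fun i => sumR (fun j => a i * a j * Cov (ts i) (ts j)) m) m).

Definition cov_continuous (Cov : R -> R -> R) : Prop :=
  forall s t, 0 <= s -> 0 <= t ->
    forall eps, 0 < eps -> exists delta, 0 < delta /\
      forall s' t', 0 <= s' -> 0 <= t' -> Rabs (s' - s) < delta -> Rabs (t' - t) < delta ->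
        Rabs (Cov s' t' - Cov s t) < eps.

(* E[(W_a - W_b)(W_c - W_d)] *)
Definition incr_cov (Cov : R -> R -> R) (a b c d : R) : R :=
  Cov a c - Cov a d - Cov b c + Cov b d.

Definition beta_n (Cov : R -> R -> R) (n j k : nat) : R :=
  incr_cov Cov (INR (S j) / INR n) (INR j / INR n) (INR (S k) / INR n) (INR k / INR n).

Definition cond_i (Cov : R -> R -> R) (T : R) : Prop :=
  exists C1 : R, forall s t, 0 < s -> s <= t -> t <= T ->
    incr_cov Cov t (t - s) t (t - s) <= C1 * Rpower s (1/2).

Definition cond_ii (Cov : R -> R -> R) (T : R) : Prop :=
  exists C1 alpha : R, 1 < alpha /\ alpha <= 3/2 /\
    let beta := 3/2 - alpha in
    forall s r t, 0 < s -> 2 * s <= r -> r <= T -> 2 * s <= t -> t <= T ->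
      2 * s <= Rabs (t - r) ->
      Rabs (incr_cov Cov t (t - s) r (r - s)) <=
        C1 * s ^ 2 * Rpower (Rabs (t - r)) (- alpha) * Rpower (Rmin t r - s) (- beta)
        + C1 * s ^ 2 * Rpower (Rabs (t - r)) (- (3/2)).

Definition nfloor (x : R) : nat := Z.to_nat (Int_part x).

Definition sum1 (f : nat -> R) (m : nat) : R := sumR (fun i => f (S i)) m.

(* The four terms of the block (j,k) are exactly the pairs (a,b) with
   a in {2j-2, 2j-1}, b in {2k-2, 2k-1}, so the left-hand side is the plain
   double sum of |beta_n(a,b)|^r over a, b < 2m (block_sum_reindex).  Writing
   q = n^{-1/2}, two bounds on a single increment covariance are combined:
   - near the diagonal, positive semidefiniteness (|E XY| <= (E X^2 + E Y^2)/2)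
     and condition (i) give |beta_n(a,b)| <= |C1| q;
   - for a, b >= 1 and |a-b| >= 2, condition (ii) with s = 1/n gives
     |beta_n(a,b)| <= |C2| q (|a-b|^{-alpha} + |a-b|^{-3/2}).
   Hence |beta_n(a,b)|^r <= (|C1| q)^{r-1} |beta_n(a,b)| and
   |beta_n(a,b)| <= q (P(|a-b|) + E(a) + E(b)), where the profile P is summable
   (alpha > 1, by telescoping power sums) and E charges the row/column a = 0.
   A Toeplitz double sum of a summable profile over N indices is O(N), which
   yields the bound C N q^r with N = 2m. *)

From Stdlib Require Import Reals Lra Lia ZArith.
Open Scope R_scope.

Lemma sumR_le (f g : nat -> R) (m : nat) :
  (forall i, (i < m)%nat -> f i <= g i) -> sumR f m <= sumR g m.
Proof.
  induction m as [|m IH]; simpl; intros Hfg; [lra|].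
  assert (f m <= g m) by (apply Hfg; lia).
  assert (sumR f m <= sumR g m) by (apply IH; intros; apply Hfg; lia).
  lra.
Qed.

Lemma sumR_ext (f g : nat -> R) (m : nat) :
  (forall i, (i < m)%nat -> f i = g i) -> sumR f m = sumR g m.
Proof.
  intros Hfg; apply Rle_antisym; apply sumR_le; intros i Hi; rewrite (Hfg i Hi); lra.
Qed.

Lemma sumR_plus (f g : nat -> R) (m : nat) :
  sumR (fun i => f i + g i) m = sumR f m + sumR g m.
Proof. induction m as [|m IH]; simpl; [lra | rewrite IH; lra]. Qed.

Lemma sumR_scal (c : R) (f : nat -> R) (m : nat) :
  sumR (fun i => c * f i) m = c * sumR f m.
Proof. induction m as [|m IH]; simpl; [lra | rewrite IH; lra]. Qed.

Lemma sumR_const (c : R) (m : nat) : sumR (fun _ => c) m = INR m * c.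
Proof. induction m as [|m IH]; simpl sumR; [simpl; lra | rewrite IH, S_INR; lra]. Qed.

Lemma sumR_shift (f : nat -> R) (m : nat) :
  sumR f (S m) = f O + sumR (fun i => f (S i)) m.
Proof. induction m as [|m IH]; simpl in *; [lra | rewrite IH; lra]. Qed.

Lemma sumR_rev (f : nat -> R) (m : nat) :
  sumR (fun i => f (m - 1 - i)%nat) m = sumR f m.
Proof.
  revert f; induction m as [|m IH]; intros f; [reflexivity|].
  simpl sumR at 1. replace (m - 0 - m)%nat with O by lia.
  rewrite (sumR_ext _ (fun i => f (S (m - 1 - i)))) by (intros i Hi; f_equal; lia).
  rewrite (IH (fun i => f (S i))), (sumR_shift f). lra.
Qed.

Lemma sumR_pairs (f : nat -> R) (m : nat) :
  sumR f (2 * m) = sumR (fun i => f (2 * i)%nat + f (2 * i + 1)%nat) m.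
Proof.
  induction m as [|m IH]; [reflexivity|].
  replace (2 * S m)%nat with (S (S (2 * m))) by lia.
  cbn [sumR]. rewrite IH. replace (2 * m + 1)%nat with (S (2 * m)) by lia. lra.
Qed.

Definition ndist (a b : nat) : nat := ((a - b) + (b - a))%nat.

Lemma INR_ndist (a b : nat) : INR (ndist a b) = Rabs (INR a - INR b).
Proof.
  unfold ndist. destruct (Nat.le_ge_cases a b) as [Hab|Hab].
  - replace (a - b)%nat with O by lia. rewrite Nat.add_0_l, minus_INR by lia.
    apply le_INR in Hab. rewrite Rabs_left1; lra.
  - replace (b - a)%nat with O by lia. rewrite Nat.add_0_r, minus_INR by lia.
    apply le_INR in Hab. rewrite Rabs_right; lra.
Qed.

(* A Toeplitz double sum sum_{a,b<N} F(|a-b|) is at most N (2K + F 0) when the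
   partial sums of F(1), F(2), ... are bounded by K: each row and column added
   when N grows contributes at most K. *)
Lemma toeplitz_sum (F : nat -> R) (K : R) (N : nat) :
  (forall M, sumR (fun d => F (S d)) M <= K) ->
  sumR (fun a => sumR (fun b => F (ndist a b)) N) N <= INR N * (2 * K + F O).
Proof.
  intros HK. induction N as [|N IH]; [simpl; lra|].
  assert (Hrow : forall g : nat -> nat,
             (forall i, (i < N)%nat -> g i = S (N - 1 - i)) ->
             sumR (fun i => F (g i)) N <= K).
  { intros g Hg. rewrite (sumR_ext _ (fun i => F (S (N - 1 - i)))) by (intros; f_equal; auto).
    rewrite (sumR_rev (fun d => F (S d))). apply HK. }
  assert (Hcol : sumR (fun a => F (ndist a N)) N <= K)
    by (apply Hrow; intros; unfold ndist; lia).
  assert (Hlast : sumR (fun b => F (ndist N b)) N <= K)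
    by (apply Hrow; intros; unfold ndist; lia).
  cbn [sumR]. rewrite sumR_plus, S_INR.
  replace (ndist N N) with O by (unfold ndist; lia).
  lra.
Qed.

Lemma Rpower_pos (x y : R) : 0 < Rpower x y.
Proof. apply exp_pos. Qed.

Lemma Rpower_base_1 (y : R) : Rpower 1 y = 1.
Proof. unfold Rpower. rewrite ln_1, Rmult_0_r. apply exp_0. Qed.

Lemma Rpower_inv (x c : R) : 0 < x -> Rpower (/ x) c = Rpower x (- c).
Proof. intros Hx. unfold Rpower. rewrite ln_Rinv by exact Hx. f_equal; ring. Qed.

Lemma Rpower_m1 (x : R) : 0 < x -> Rpower x (- 1) = / x.
Proof.
  intros Hx. pose proof (Rpower_Ropp x 1) as H. rewrite Rpower_1 in H by exact Hx.
  exact H.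
Qed.

Lemma Rpower_antitone (x y c : R) : 0 <= c -> 0 < x -> x <= y -> Rpower y (- c) <= Rpower x (- c).
Proof.
  intros Hc Hx Hxy. rewrite !Rpower_Ropp.
  apply Rinv_le_contravar; [apply Rpower_pos | apply Rle_Rpower_l; lra].
Qed.

Lemma Rpower_pow_exp (x y : R) (k : nat) : Rpower x y ^ k = Rpower x (y * INR k).
Proof. rewrite <- Rpower_pow by apply Rpower_pos. apply Rpower_mult. Qed.

Lemma Rpower_rescale (d x c : R) : 0 < d -> 0 < x ->
  (/ x) ^ 2 * Rpower (d / x) (- c) = Rpower d (- c) * Rpower x (c - 2).
Proof.
  intros Hd Hx. unfold Rdiv.
  rewrite <- Rpower_mult_distr by (try apply Rinv_0_lt_compat; lra).
  rewrite Rpower_inv by exact Hx.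
  replace (c - 2) with (- 1 + (- 1 + - - c)) by ring.
  rewrite !Rpower_plus, Rpower_m1 by exact Hx. ring.
Qed.

(* ln(x+1) - ln x >= 1/(x+1), from ln y <= y - 1. *)
Lemma ln_ratio_lower (x : R) : 0 < x -> 1 / (x + 1) <= ln (x + 1) - ln x.
Proof.
  intros Hx.
  assert (Hpos : 0 < x / (x + 1)) by (apply Rdiv_lt_0_compat; lra).
  pose proof (exp_ineq1_le (ln (x / (x + 1)))) as Hexp.
  rewrite exp_ln in Hexp by exact Hpos.
  unfold Rdiv in Hexp. rewrite ln_mult, ln_Rinv in Hexp by (try apply Rinv_0_lt_compat; lra).
  replace (x * / (x + 1)) with (1 - 1 / (x + 1)) in Hexp by (field; lra).
  lra.
Qed.

(* Telescoping estimate (x+1)^{-(g+1)} <= (x^{-g} - (x+1)^{-g}) / g, the discrete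
   form of the integral of t^{-(g+1)}. *)
Lemma power_telescope (x g : R) : 0 < x -> 0 < g ->
  Rpower (x + 1) (- (g + 1)) <= (Rpower x (- g) - Rpower (x + 1) (- g)) / g.
Proof.
  intros Hx Hg. unfold Rpower.
  set (L := ln (x + 1) - ln x).
  assert (HL : g * (1 / (x + 1)) <= g * L)
    by (apply Rmult_le_compat_l; [lra | apply ln_ratio_lower; exact Hx]).
  assert (Hsplit : exp (- g * ln x) = exp (- g * ln (x + 1)) * exp (g * L))
    by (rewrite <- exp_plus; f_equal; unfold L; ring).
  assert (Hlast : exp (- (g + 1) * ln (x + 1)) = exp (- g * ln (x + 1)) * (1 / (x + 1))).
  { replace (- (g + 1) * ln (x + 1)) with (- g * ln (x + 1) + - ln (x + 1)) by ring.
    rewrite exp_plus, exp_Ropp, exp_ln by lra. field. lra. }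
  pose proof (exp_ineq1_le (g * L)).
  pose proof (exp_pos (- g * ln (x + 1))) as Hpos.
  rewrite Hsplit, Hlast.
  apply Rmult_le_reg_l with g; [exact Hg|].
  replace (g * ((exp (- g * ln (x + 1)) * exp (g * L) - exp (- g * ln (x + 1))) / g))
    with (exp (- g * ln (x + 1)) * (exp (g * L) - 1)) by (field; lra).
  replace (g * (exp (- g * ln (x + 1)) * (1 / (x + 1))))
    with (exp (- g * ln (x + 1)) * (g * (1 / (x + 1)))) by ring.
  apply Rmult_le_compat_l; lra.
Qed.

Lemma power_tail_sum (g : R) (N : nat) : 0 < g ->
  sumR (fun d => Rpower (INR (d + 2)) (- (g + 1))) N <= 1 / g.
Proof.
  intros Hg.
  assert (Hinv : forall M : nat,
    sumR (fun d => Rpower (INR (d + 2)) (- (g + 1))) M <= (1 - Rpower (INR (M + 1)) (- g)) / g).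
  { induction M as [|M IH].
    - simpl. rewrite Rpower_base_1. unfold Rdiv. lra.
    - cbn [sumR].
      assert (Hx : 0 < INR (M + 1)) by (apply lt_0_INR; lia).
      pose proof (power_telescope _ _ Hx Hg) as Hstep.
      replace (INR (M + 1) + 1) with (INR (M + 2)) in Hstep
        by (rewrite !plus_INR; simpl; ring).
      replace (S M + 1)%nat with (M + 2)%nat by lia.
      apply Rle_trans with ((1 - Rpower (INR (M + 1)) (- g)) / g
        + (Rpower (INR (M + 1)) (- g) - Rpower (INR (M + 2)) (- g)) / g); [lra|].
      right. field. lra. }
  eapply Rle_trans; [apply Hinv|].
  pose proof (Rpower_pos (INR (N + 1)) (- g)).
  unfold Rdiv. apply Rmult_le_compat_r; [left; apply Rinv_0_lt_compat|]; lra.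
Qed.

(* The decay profile of condition (ii) at lag d, and the profile bounding
   |beta_n| / q at lag d: the constant A up to lag 1, C times the decay beyond. *)
Definition far_profile (al : R) (d : nat) : R :=
  Rpower (INR d) (- al) + Rpower (INR d) (- (3 / 2)).

Definition dist_profile (A C al : R) (d : nat) : R :=
  if Nat.leb d 1 then A else C * far_profile al d.

Lemma dist_profile_nonneg (A C al : R) (d : nat) :
  0 <= A -> 0 <= C -> 0 <= dist_profile A C al d.
Proof.
  intros HA HC. unfold dist_profile, far_profile. destruct (Nat.leb d 1); [exact HA|].
  pose proof (Rpower_pos (INR d) (- al)). pose proof (Rpower_pos (INR d) (- (3 / 2))).
  apply Rmult_le_pos; lra.
Qed.

Lemma dist_profile_summable (A C al : R) (M : nat) :
  0 <= A -> 0 <= C -> 1 < al ->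
  sumR (fun d => dist_profile A C al (S d)) M <= A + C * (1 / (al - 1) + 2).
Proof.
  intros HA HC Hal.
  assert (Hbound : 0 <= C * (1 / (al - 1) + 2)).
  { apply Rmult_le_pos; [exact HC|].
    assert (0 < 1 / (al - 1)) by (apply Rdiv_lt_0_compat; lra). lra. }
  destruct M as [|M]; [simpl; lra|].
  rewrite sumR_shift.
  rewrite (sumR_ext _ (fun d => C * (Rpower (INR (d + 2)) (- ((al - 1) + 1))
                                   + Rpower (INR (d + 2)) (- (1 / 2 + 1))))).
  2:{ intros d _. unfold dist_profile, far_profile. simpl Nat.leb. cbv iota.
      replace (S (S d)) with (d + 2)%nat by lia.
      replace (- (al - 1 + 1)) with (- al) by ring.
      replace (- (1 / 2 + 1)) with (- (3 / 2)) by field. reflexivity. }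
  rewrite sumR_scal, sumR_plus.
  pose proof (power_tail_sum (al - 1) M ltac:(lra)).
  pose proof (power_tail_sum (1 / 2) M ltac:(lra)).
  replace (1 / (1 / 2)) with 2 in * by field.
  unfold dist_profile at 1. simpl Nat.leb. cbv iota.
  assert (C * (sumR (fun d => Rpower (INR (d + 2)) (- (al - 1 + 1))) M
             + sumR (fun d => Rpower (INR (d + 2)) (- (1 / 2 + 1))) M)
          <= C * (1 / (al - 1) + 2)) by (apply Rmult_le_compat_l; lra).
  lra.
Qed.

(* The charge of the boundary row/column 0, where condition (ii) is unavailable. *)
Definition edge (B : R) (a : nat) : R := if Nat.eqb a 0 then B else 0.

Lemma edge_nonneg (B : R) (a : nat) : 0 <= B -> 0 <= edge B a.
Proof. intros HB. unfold edge. destruct (Nat.eqb a 0); lra. Qed.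

Lemma edge_sum (B : R) (N : nat) : 0 <= B -> sumR (edge B) N <= B.
Proof.
  intros HB. destruct N as [|N]; [simpl; lra|].
  rewrite sumR_shift, (sumR_ext _ (fun _ => 0)) by reflexivity.
  rewrite sumR_const. unfold edge; simpl. lra.
Qed.

Lemma profile_double_sum (B C al : R) (N : nat) : 0 <= B -> 0 <= C -> 1 < al ->
  sumR (fun a => sumR (fun b => dist_profile B C al (ndist a b) + edge B a + edge B b) N) N
  <= INR N * (2 * (B + C * (1 / (al - 1) + 2)) + 3 * B).
Proof.
  intros HB HC Hal.
  rewrite (sumR_ext _ (fun a => sumR (fun b => dist_profile B C al (ndist a b)) N
                                + INR N * edge B a + sumR (edge B) N))
    by (intros a _; rewrite !sumR_plus, sumR_const; reflexivity).
  rewrite !sumR_plus, sumR_scal, sumR_const.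
  pose proof (toeplitz_sum (dist_profile B C al) _ N
    (fun M => dist_profile_summable B C al M HB HC Hal)) as Htoeplitz.
  pose proof (edge_sum B N HB). pose proof (pos_INR N).
  assert (dist_profile B C al 0 = B) as Hzero by reflexivity.
  assert (INR N * sumR (edge B) N <= INR N * B) by (apply Rmult_le_compat_l; lra).
  nra.
Qed.

(* For 0 <= x <= A, x^r <= A^{r-1} x: all but one factor is bounded by the
   uniform estimate. *)
Lemma pow_le_scaled (x A Y : R) (r : nat) : (1 <= r)%nat ->
  0 <= x -> x <= A -> x <= Y -> x ^ r <= A ^ (r - 1) * Y.
Proof.
  intros Hr Hx HA HY. destruct r as [|r]; [lia|].
  simpl. replace (r - 0)%nat with r by lia. rewrite Rmult_comm.
  apply Rmult_le_compat; auto using pow_le. apply pow_incr; lra.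
Qed.

(* Positive semidefiniteness of the covariance in the form
   |E[XY]| <= (E[X^2] + E[Y^2]) / 2 for increments X, Y. *)
Lemma incr_cov_am_gm (Cov : R -> R -> R) (a b c d : R) :
  is_covariance Cov -> 0 <= a -> 0 <= b -> 0 <= c -> 0 <= d ->
  Rabs (incr_cov Cov a b c d) <= (incr_cov Cov a b a b + incr_cov Cov c d c d) / 2.
Proof.
  intros [Hsym Hpsd] Ha Hb Hc Hd.
  set (ts := fun i => match i with 0%nat => a | 1%nat => b | 2%nat => c | _ => d end).
  assert (Hts : forall i, 0 <= ts i) by (intros [|[|[|i]]]; simpl; auto).
  pose proof (Hpsd 4%nat ts (fun i => match i with
    0%nat => 1 | 1%nat => -1 | 2%nat => 1 | 3%nat => -1 | _ => 0 end) Hts) as Hsum.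
  pose proof (Hpsd 4%nat ts (fun i => match i with
    0%nat => 1 | 1%nat => -1 | 2%nat => -1 | 3%nat => 1 | _ => 0 end) Hts) as Hdiff.
  simpl in Hsum, Hdiff. unfold ts in Hsum, Hdiff.
  rewrite (Hsym b a), (Hsym c a), (Hsym d a), (Hsym c b), (Hsym d b), (Hsym d c)
    in Hsum, Hdiff by auto.
  unfold incr_cov. rewrite (Hsym b a), (Hsym d c) by auto.
  apply Rabs_le. split; lra.
Qed.

Section IncrementBounds.

Variables (Cov : R -> R -> R) (T : R) (n : nat).
Hypothesis Hcov : is_covariance Cov.
Hypothesis Hn : (1 <= n)%nat.

Variable C1 : R.
Hypothesis var_bound : forall s t, 0 < s -> s <= t -> t <= T ->
  incr_cov Cov t (t - s) t (t - s) <= C1 * Rpower s (1 / 2).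

Variables (C2 al : R).
Hypothesis Hal : 1 < al /\ al <= 3 / 2.
Hypothesis cov_bound : forall s r t, 0 < s -> 2 * s <= r -> r <= T -> 2 * s <= t -> t <= T ->
  2 * s <= Rabs (t - r) ->
  Rabs (incr_cov Cov t (t - s) r (r - s)) <=
    C2 * s ^ 2 * Rpower (Rabs (t - r)) (- al) * Rpower (Rmin t r - s) (- (3 / 2 - al))
    + C2 * s ^ 2 * Rpower (Rabs (t - r)) (- (3 / 2)).

Let n_pos : 0 < INR n := lt_0_INR n Hn.

Lemma grid_nonneg (k : nat) : 0 <= INR k / INR n.
Proof. unfold Rdiv. apply Rmult_le_pos; [apply pos_INR | left; apply Rinv_0_lt_compat, n_pos]. Qed.

Lemma grid_step (k : nat) : INR (S k) / INR n - / INR n = INR k / INR n.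
Proof. rewrite S_INR. field. lra. Qed.

Lemma grid_le (k l : nat) : (k <= l)%nat -> INR k / INR n <= INR l / INR n.
Proof.
  intros Hkl. unfold Rdiv. apply Rmult_le_compat_r.
  - left. apply Rinv_0_lt_compat, n_pos.
  - apply le_INR, Hkl.
Qed.

Lemma grid_dist (a b : nat) :
  Rabs (INR (S a) / INR n - INR (S b) / INR n) = INR (ndist a b) / INR n.
Proof.
  rewrite INR_ndist, !S_INR.
  replace ((INR a + 1) / INR n - (INR b + 1) / INR n) with ((INR a - INR b) * / INR n)
    by (field; lra).
  rewrite Rabs_mult, (Rabs_right (/ INR n)); [reflexivity|].
  left. apply Rinv_0_lt_compat, n_pos.
Qed.

(* Condition (i) at the scale s = 1/n bounds the variance of each increment. *)
Lemma beta_diag_bound (a : nat) : INR (S a) / INR n <= T ->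
  beta_n Cov n a a <= Rabs C1 * Rpower (INR n) (- (1 / 2)).
Proof.
  intros HaT.
  assert (Hstep : / INR n <= INR (S a) / INR n).
  { replace (/ INR n) with (INR 1 / INR n) by (simpl; field; lra). apply grid_le. lia. }
  pose proof (var_bound _ _ (Rinv_0_lt_compat _ n_pos) Hstep HaT) as Hvar.
  rewrite grid_step, Rpower_inv in Hvar by exact n_pos.
  pose proof (Rpower_pos (INR n) (- (1 / 2))) as Hq.
  pose proof (Rmult_le_compat_r _ _ _ (Rlt_le _ _ Hq) (Rle_abs C1)).
  unfold beta_n. lra.
Qed.

Lemma beta_near_bound (a b : nat) : INR (S a) / INR n <= T -> INR (S b) / INR n <= T ->
  Rabs (beta_n Cov n a b) <= Rabs C1 * Rpower (INR n) (- (1 / 2)).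
Proof.
  intros HaT HbT.
  pose proof (beta_diag_bound a HaT). pose proof (beta_diag_bound b HbT).
  unfold beta_n in *. eapply Rle_trans; [apply incr_cov_am_gm; auto using grid_nonneg|].
  lra.
Qed.

(* Far bound from condition (ii) with s = 1/n: the factor (min - s)^{-beta} is
   at most n^beta, and the powers of n combine to n^{-2 + alpha + beta} = n^{-1/2}. *)
Lemma beta_far_bound (a b : nat) : (1 <= a)%nat -> (1 <= b)%nat -> (2 <= ndist a b)%nat ->
  INR (S a) / INR n <= T -> INR (S b) / INR n <= T ->
  Rabs (beta_n Cov n a b) <= Rabs C2 * Rpower (INR n) (- (1 / 2)) * far_profile al (ndist a b).
Proof.
  intros Ha Hb Hd HaT HbT.
  set (s := / INR n).
  assert (Hs : 0 < s) by (apply Rinv_0_lt_compat, n_pos).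
  assert (Htwo : forall k : nat, (2 <= k)%nat -> 2 * s <= INR k / INR n).
  { intros k Hk. replace (2 * s) with (INR 2 / INR n) by (unfold s; simpl; field; lra).
    apply grid_le, Hk. }
  pose proof (cov_bound s (INR (S b) / INR n) (INR (S a) / INR n) Hs
    (Htwo (S b) ltac:(lia)) HbT (Htwo (S a) ltac:(lia)) HaT
    ltac:(rewrite grid_dist; apply Htwo, Hd)) as Hcov_ab.
  unfold s in Hcov_ab. rewrite !grid_step, grid_dist in Hcov_ab. fold s in Hcov_ab.
  set (d := INR (ndist a b)) in *.
  assert (Hd_pos : 0 < d) by (apply lt_0_INR; lia).
  set (m := Rmin (INR (S a) / INR n) (INR (S b) / INR n) - s) in *.
  assert (Hm : s <= m).
  { pose proof (Htwo (S a) ltac:(lia)). pose proof (Htwo (S b) ltac:(lia)).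
    unfold m, Rmin. destruct (Rle_dec _ _); lra. }
  set (q := Rpower (INR n) (- (1 / 2))).
  assert (Hmin_term : Rpower m (- (3 / 2 - al)) <= Rpower (INR n) (3 / 2 - al)).
  { replace (Rpower (INR n) (3 / 2 - al)) with (Rpower s (- (3 / 2 - al)))
      by (unfold s; rewrite Rpower_inv by exact n_pos; f_equal; ring).
    apply Rpower_antitone; lra. }
  assert (Hterm1 : s ^ 2 * Rpower (d / INR n) (- al) * Rpower m (- (3 / 2 - al))
                   <= q * Rpower d (- al)).
  { unfold s. rewrite Rpower_rescale by (exact Hd_pos || exact n_pos).
    apply Rle_trans with (Rpower d (- al) * (Rpower (INR n) (al - 2) * Rpower (INR n) (3 / 2 - al))).
    - rewrite <- Rmult_assoc. apply Rmult_le_compat_l; [|exact Hmin_term].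
      apply Rmult_le_pos; left; apply Rpower_pos.
    - rewrite <- Rpower_plus. unfold q. right. rewrite Rmult_comm. do 2 f_equal. field. }
  assert (Hterm2 : s ^ 2 * Rpower (d / INR n) (- (3 / 2)) = q * Rpower d (- (3 / 2))).
  { unfold s. rewrite Rpower_rescale by (exact Hd_pos || exact n_pos).
    unfold q. rewrite Rmult_comm. do 2 f_equal. field. }
  assert (Hnonneg : 0 <= s ^ 2 * Rpower (d / INR n) (- al) * Rpower m (- (3 / 2 - al))).
  { pose proof (Rpower_pos (d / INR n) (- al)). pose proof (Rpower_pos m (- (3 / 2 - al))).
    pose proof (pow2_ge_0 s). apply Rmult_le_pos; [apply Rmult_le_pos|]; lra. }
  assert (Habs : forall x : R, 0 <= x -> C2 * x <= Rabs C2 * x)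
    by (intros x Hx; apply Rmult_le_compat_r; [exact Hx | apply Rle_abs]).
  pose proof (Habs _ Hnonneg).
  pose proof (Habs (q * Rpower d (- (3 / 2)))
    ltac:(apply Rmult_le_pos; left; apply Rpower_pos)).
  pose proof (Rmult_le_compat_l _ _ _ (Rabs_pos C2) Hterm1).
  unfold beta_n, far_profile. fold d. eapply Rle_trans; [exact Hcov_ab|].
  replace (C2 * s ^ 2 * Rpower (d / INR n) (- al) * Rpower m (- (3 / 2 - al))
           + C2 * s ^ 2 * Rpower (d / INR n) (- (3 / 2)))
    with (C2 * (s ^ 2 * Rpower (d / INR n) (- al) * Rpower m (- (3 / 2 - al)))
          + C2 * (s ^ 2 * Rpower (d / INR n) (- (3 / 2)))) by ring.
  rewrite Hterm2. lra.
Qed.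

Lemma beta_profile_bound (a b : nat) : INR (S a) / INR n <= T -> INR (S b) / INR n <= T ->
  Rabs (beta_n Cov n a b) <= Rpower (INR n) (- (1 / 2)) *
    (dist_profile (Rabs C1) (Rabs C2) al (ndist a b) + edge (Rabs C1) a + edge (Rabs C1) b).
Proof.
  intros HaT HbT.
  pose proof (beta_near_bound a b HaT HbT) as Hnear.
  pose proof (Rpower_pos (INR n) (- (1 / 2))) as Hq.
  pose proof (edge_nonneg (Rabs C1) a (Rabs_pos C1)).
  pose proof (edge_nonneg (Rabs C1) b (Rabs_pos C1)).
  pose proof (dist_profile_nonneg (Rabs C1) (Rabs C2) al (ndist a b) (Rabs_pos C1) (Rabs_pos C2)).
  assert (Hweaken : forall X, Rabs C1 <= X ->
            Rabs (beta_n Cov n a b) <= Rpower (INR n) (- (1 / 2)) * X).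
  { intros X HX. eapply Rle_trans; [exact Hnear|]. rewrite Rmult_comm.
    apply Rmult_le_compat_l; lra. }
  destruct (Nat.eq_dec a 0) as [->|Ha]; [apply Hweaken; unfold edge at 1; simpl; lra|].
  destruct (Nat.eq_dec b 0) as [->|Hb]; [apply Hweaken; unfold edge at 2; simpl; lra|].
  unfold dist_profile. destruct (Nat.leb_spec (ndist a b) 1) as [Hd|Hd]; [apply Hweaken; lra|].
  eapply Rle_trans; [apply beta_far_bound; auto; lia|].
  unfold edge. rewrite (proj2 (Nat.eqb_neq a 0) Ha), (proj2 (Nat.eqb_neq b 0) Hb).
  right. ring.
Qed.

Lemma beta_power_sum (N r : nat) : (1 <= r)%nat -> INR N / INR n <= T ->
  sumR (fun a => sumR (fun b => Rabs (beta_n Cov n a b) ^ r) N) N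
  <= Rabs C1 ^ (r - 1) * Rpower (INR n) (- (1 / 2)) ^ r
     * (INR N * (2 * (Rabs C1 + Rabs C2 * (1 / (al - 1) + 2)) + 3 * Rabs C1)).
Proof.
  intros Hr HNT.
  set (q := Rpower (INR n) (- (1 / 2))).
  set (P := fun a b => dist_profile (Rabs C1) (Rabs C2) al (ndist a b)
                       + edge (Rabs C1) a + edge (Rabs C1) b).
  assert (HT : forall a, (a < N)%nat -> INR (S a) / INR n <= T)
    by (intros a Ha; eapply Rle_trans; [apply grid_le, Ha | exact HNT]).
  apply Rle_trans with (sumR (fun a => sumR (fun b => (Rabs C1 * q) ^ (r - 1) * (q * P a b)) N) N).
  { apply sumR_le; intros a Ha; apply sumR_le; intros b Hb.
    apply pow_le_scaled; auto using Rabs_pos.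
    - apply beta_near_bound; auto.
    - apply beta_profile_bound; auto. }
  rewrite (sumR_ext _ (fun a => (Rabs C1 * q) ^ (r - 1) * q * sumR (P a) N))
    by (intros a _; rewrite <- sumR_scal; apply sumR_ext; intros; ring).
  rewrite sumR_scal.
  assert (Hq_pow : Rabs C1 ^ (r - 1) * q ^ r = (Rabs C1 * q) ^ (r - 1) * q).
  { rewrite Rpow_mult_distr. destruct r as [|r]; [lia|].
    simpl. replace (r - 0)%nat with r by lia. ring. }
  rewrite Hq_pow. apply Rmult_le_compat_l.
  - apply Rmult_le_pos; [apply pow_le, Rmult_le_pos; [apply Rabs_pos|] |]; left; apply Rpower_pos.
  - apply profile_double_sum; [apply Rabs_pos | apply Rabs_pos | exact (proj1 Hal)].
Qed.

End IncrementBounds.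

Lemma block_sum_reindex (f : nat -> nat -> R) (m : nat) :
  sum1 (fun j => sum1 (fun k =>
      f (2 * j - 1)%nat (2 * k - 1)%nat + f (2 * j - 1)%nat (2 * k - 2)%nat
    + f (2 * j - 2)%nat (2 * k - 1)%nat + f (2 * j - 2)%nat (2 * k - 2)%nat) m) m
  = sumR (fun a => sumR (fun b => f a b) (2 * m)) (2 * m).
Proof.
  unfold sum1. rewrite sumR_pairs. apply sumR_ext; intros j _.
  rewrite !sumR_pairs, <- sumR_plus. apply sumR_ext; intros k _.
  replace (2 * S j - 1)%nat with (2 * j + 1)%nat by lia.
  replace (2 * S j - 2)%nat with (2 * j)%nat by lia.
  replace (2 * S k - 1)%nat with (2 * k + 1)%nat by lia.
  replace (2 * S k - 2)%nat with (2 * k)%nat by lia.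
  ring.
Qed.

Lemma nfloor_le (x : R) : 0 <= x -> INR (nfloor x) <= x.
Proof.
  intros Hx. unfold nfloor. destruct (base_Int_part x) as [Hlow _].
  destruct (Z_lt_le_dec (Int_part x) 0) as [Hneg|Hnneg].
  - replace (Z.to_nat (Int_part x)) with 0%nat; [simpl; exact Hx|].
    destruct (Int_part x); [reflexivity | lia | reflexivity].
  - rewrite INR_IZR_INZ, Z2Nat.id by exact Hnneg. exact Hlow.
Qed.

(* Main result: with m = floor(nt/2) we have 2m/n <= t <= T, so beta_power_sum
   applies with N = 2m. *)
Theorem corollary4p2 (Cov : R -> R -> R) (T : R) :
  0 < T ->
  is_covariance Cov -> cov_continuous Cov ->
  cond_i Cov T -> cond_ii Cov T ->
  forall r : nat, (1 <= r)%nat ->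
  exists C : R, forall (n : nat) (t : R), (1 <= n)%nat -> 0 <= t -> t <= T ->
    sum1 (fun j => sum1 (fun k =>
        Rabs (beta_n Cov n (2*j-1) (2*k-1)) ^ r
      + Rabs (beta_n Cov n (2*j-1) (2*k-2)) ^ r
      + Rabs (beta_n Cov n (2*j-2) (2*k-1)) ^ r
      + Rabs (beta_n Cov n (2*j-2) (2*k-2)) ^ r)
      (nfloor (INR n * t / 2))) (nfloor (INR n * t / 2))
    <= C * INR (nfloor (INR n * t / 2)) * Rpower (INR n) (- (INR r) / 2).
Proof.
  intros _ Hcov _ [C1 Hvar] [C2 [al [Hal1 [Hal2 Hfar]]]] r Hr. cbv zeta in Hfar.
  set (K := Rabs C1 + Rabs C2 * (1 / (al - 1) + 2)).
  exists (2 * Rabs C1 ^ (r - 1) * (2 * K + 3 * Rabs C1)).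
  intros n t Hn Ht0 HtT.
  pose proof (lt_0_INR n Hn) as Hn_pos.
  set (m := nfloor (INR n * t / 2)).
  assert (Hgrid : INR (2 * m) / INR n <= T).
  { assert (INR m <= INR n * t / 2) by (apply nfloor_le; apply Rmult_le_pos; [apply Rmult_le_pos|]; lra).
    rewrite mult_INR. apply Rle_trans with t; [|exact HtT].
    apply Rmult_le_reg_r with (INR n); [exact Hn_pos|].
    simpl. field_simplify; lra. }
  rewrite (block_sum_reindex (fun a b => Rabs (beta_n Cov n a b) ^ r)).
  eapply Rle_trans.
  { apply (beta_power_sum Cov T n Hcov Hn C1 Hvar C2 al (conj Hal1 Hal2) Hfar (2 * m) r Hr Hgrid). }
  rewrite Rpower_pow_exp, mult_INR. fold K.
  right. replace (- (1 / 2) * INR r) with (- INR r / 2) by field. simpl INR. ring.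
Qed.
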